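(* Let $U\in\mathbb{R}^{d\times n}$ be a frame with $n\ge2$, $z\in\mathbb{R}^n_{++}$, and $c\in\mathbb{R}^n_+$ with $\langle c,1_n\rangle=d$. Order the indices so that $x:=\mathrm{lev}^U(z)-c$ is non-decreasing, and let $T$ be a prefix set $\{1,\dots,k\}$, $1\le k\le n-1$, with largest margin $\gamma$ among such prefix sets. Then \[\gamma^2\ge\frac{1}{2n^3}\|\mathrm{lev}^U(z)-c\|_2^2.\]
   Context: A frame is a full row rank matrix $U=(u_1,\dots,u_n)\in\mathbb{R}^{d\times n}$; $Z=\mathrm{diag}(z)$; $\mathrm{lev}^U_j(z):=z_ju_j^{\mathsf T}(UZU^{\mathsf T})^{-1}u_j$. The margin of $T\subseteq[n]$ is the largest $\gamma\ge0$ for which there is $\nu\in\mathbb{R}$ with $\max_{j\in T}(\mathrm{lev}^U_j(z)-c_j)\le\nu-\gamma\le\nu+\gamma\le\min_{j\notin T}(\mathrm{lev}^U_j(z)-c_j)$. *)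

From mathcomp Require Import all_boot all_order all_algebra all_fingroup.
Set Implicit Arguments. Unset Strict Implicit. Unset Printing Implicit Defensive.
Import Order.TTheory GRing.Theory Num.Theory.
Local Open Scope ring_scope.

Definition frame (R : realFieldType) (d n : nat) (U : 'M[R]_(d, n)) : Prop :=
  row_free U.

Definition lev (R : realFieldType) (d n : nat) (U : 'M[R]_(d, n))
  (z : 'I_n -> R) (j : 'I_n) : R :=
  z j * ((col j U)^T *m invmx (U *m diag_mx (\row_i z i) *m U^T) *m col j U) ord0 ord0.

Definition margin_ok (R : realFieldType) (d n : nat) (U : 'M[R]_(d, n))
  (z c : 'I_n -> R) (T : {set 'I_n}) (g : R) : Prop :=
  0 <= g /\ exists nu : R,
    (forall j, j \in T -> lev U z j - c j <= nu - g) /\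
    (forall j, j \notin T -> nu + g <= lev U z j - c j).

Definition is_margin (R : realFieldType) (d n : nat) (U : 'M[R]_(d, n))
  (z c : 'I_n -> R) (T : {set 'I_n}) (g : R) : Prop :=
  margin_ok U z c T g /\ forall g', margin_ok U z c T g' -> g' <= g.

Definition prefix_set (n : nat) (s : 'S_n) (k : nat) : {set 'I_n} :=
  [set s i | i : 'I_n & (i < k)%N].

From mathcomp Require Import all_boot all_order all_algebra all_fingroup.
From mathcomp Require Import ring lra.
Import Order.TTheory GRing.Theory Num.Theory.
Set Implicit Arguments. Unset Strict Implicit. Unset Printing Implicit Defensive.
Local Open Scope ring_scope.

(* With M := U Z U^T, the leverages sum to tr (M^-1 M) = d, so the excess
   x := lev - c has zero sum.  Along the sorted order, half of each gap
   x_(i+1) - x_i is exactly the margin of the prefix set {1, ..., i+1}, so by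
   maximality of gamma every gap is at most 2 gamma and x spreads over an
   interval of length at most 2 (n-1) gamma.  A zero-sum vector with values in
   [a, b] has squared norm at most n ((b - a) / 2)^2 <= n^3 gamma^2. *)

Lemma mul_diag_trmx_sum_outer (R : comPzRingType) (d n : nat)
    (U : 'M[R]_(d, n)) (z : 'I_n -> R) :
  U *m diag_mx (\row_i z i) *m U^T = \sum_j z j *: (col j U *m (col j U)^T).
Proof.
apply/matrixP => a b; rewrite mul_mx_diag !mxE summxE; apply: eq_bigr => j _.
by rewrite !mxE big_ord1 !mxE mulrAC mulrC.
Qed.

Lemma diag_quad_form (R : comPzRingType) (n : nat) (z : 'I_n -> R) (w : 'rV[R]_n) :
  (w *m diag_mx (\row_i z i) *m w^T) 0 0 = \sum_j z j * w 0 j ^+ 2.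
Proof.
by rewrite mul_mx_diag !mxE; apply: eq_bigr => j _; rewrite !mxE mulrAC mulrC expr2.
Qed.

Lemma frame_gram_unitmx (R : realFieldType) (d n : nat)
    (U : 'M[R]_(d, n)) (z : 'I_n -> R) :
  row_free U -> (forall j, 0 < z j) ->
  U *m diag_mx (\row_i z i) *m U^T \in unitmx.
Proof.
move=> freeU z_gt0; rewrite -row_free_unit; apply: inj_row_free => v vM0.
have : (v *m U *m diag_mx (\row_i z i) *m (v *m U)^T) 0 0 = 0.
  have -> : v *m U *m diag_mx (\row_i z i) *m (v *m U)^T
           = v *m (U *m diag_mx (\row_i z i) *m U^T) *m v^T by rewrite trmx_mul !mulmxA.
  by rewrite vM0 mul0mx mxE.
have quad_ge0 i : true -> 0 <= z i * (v *m U) 0 i ^+ 2.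
  by move=> _; rewrite mulr_ge0 ?sqr_ge0 ?ltW.
rewrite diag_quad_form => /(psumr_eq0P quad_ge0) quad0.
have vU0 : v *m U = 0.
  apply/rowP => j; rewrite [RHS]mxE.
  by move/eqP: (quad0 j isT); rewrite mulf_eq0 (gt_eqF (z_gt0 j)) sqrf_eq0 => /eqP.
by apply/eqP; rewrite -(mulmx_free_eq0 _ freeU) vU0.
Qed.

Lemma sum_lev (R : realFieldType) (d n : nat) (U : 'M[R]_(d, n)) (z : 'I_n -> R) :
  U *m diag_mx (\row_i z i) *m U^T \in unitmx -> \sum_j lev U z j = d%:R.
Proof.
set M := U *m _ *m _ => unitM.
rewrite -(mxtrace1 R d) -(mulmxV unitM) {1}/M mul_diag_trmx_sum_outer mulmx_suml raddf_sum.
apply: eq_bigr => j _.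
by rewrite /lev -/M -trace_mx11 -scalemxAl /= mxtraceZ mxtrace_mulC mulmxA.
Qed.

Lemma mem_prefix_set (n : nat) (s : 'S_n) (k : nat) (i : 'I_n) :
  (s i \in prefix_set s k) = (i < k)%N.
Proof.
apply/imsetP/idP => [[i' + /perm_inj ->]|lt_ik]; first by rewrite inE.
by exists i; rewrite ?inE.
Qed.

Definition excess (R : realFieldType) (d n : nat) (U : 'M[R]_(d, n))
    (z c : 'I_n -> R) (j : 'I_n) : R :=
  lev U z j - c j.

Lemma is_margin_prefix_gap (R : realFieldType) (d n : nat) (U : 'M[R]_(d, n))
    (z c : 'I_n -> R) (s : 'S_n) (i i1 : 'I_n) :
  (forall i j : 'I_n, (i <= j)%N -> excess U z c (s i) <= excess U z c (s j)) ->
  i1 = i.+1 :> nat ->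
  is_margin U z c (prefix_set s i.+1) ((excess U z c (s i1) - excess U z c (s i)) / 2).
Proof.
move=> sorted_x i1E; rewrite /is_margin /margin_ok; rewrite /excess in sorted_x *.
set xi := lev U z (s i) - c (s i); set xi1 := lev U z (s i1) - c (s i1).
have le_xi_xi1 : xi <= xi1 by apply: sorted_x; rewrite i1E.
split.
  split; first by rewrite divr_ge0 // subr_ge0.
  exists ((xi + xi1) / 2); split => j; rewrite -(permKV s j) mem_prefix_set.
    by rewrite ltnS => /sorted_x; rewrite -/xi; lra.
  by rewrite ltnS -ltnNge -i1E => /sorted_x; rewrite -/xi1; lra.
move=> g [_ [nu [inT notinT]]].
have := inT (s i); rewrite mem_prefix_set ltnSn -/xi => /(_ isT).
have := notinT (s i1); rewrite mem_prefix_set i1E ltnn -/xi1 => /(_ isT).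
lra.
Qed.

Lemma ord_telescope_le (R : numDomainType) (n : nat) (f : 'I_n -> R) (delta : R) :
  (forall i i1 : 'I_n, i1 = i.+1 :> nat -> f i1 - f i <= delta) ->
  forall i j : 'I_n, (i <= j)%N -> f j - f i <= (j - i)%:R * delta.
Proof.
move=> step i j /subnK; move: (j - i)%N => m; elim: m j => [|m IH] j jE.
  by rewrite (_ : j = i) ?subrr ?mul0r //; apply: val_inj.
have lt_j' : (m + i < n)%N by rewrite (leq_ltn_trans _ (ltn_ord j)) // -jE.
rewrite -(subrK (f (Ordinal lt_j')) (f j)) -addrA mulrSr mulrDl mul1r addrC.
by apply: lerD; [exact: IH | apply: step; rewrite /= -jE].
Qed.

Lemma sum_sqr_le_range (R : realFieldType) (I : finType) (y : I -> R) (a b : R) :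
  \sum_i y i = 0 -> (forall i, a <= y i <= b) ->
  \sum_i y i ^+ 2 <= #|I|%:R * ((b - a) / 2) ^+ 2.
Proof.
move=> sum_y0 y_range.
have pointwise i : y i ^+ 2 <= (a + b) * y i - a * b.
  by have /andP[] := y_range i; nra.
apply: le_trans (ler_sum _ (fun i _ => pointwise i)) _.
rewrite sumrB -mulr_sumr sum_y0 mulr0 sub0r sumr_const.
rewrite -[_ *+ _]mulr_natl -mulrN; apply: ler_wpM2l => //.
have := sqr_ge0 ((a + b) / 2); lra.
Qed.

Lemma sum_sqr_le_spread (R : realFieldType) (n : nat) (y : 'I_n -> R) (a g : R) :
  (0 < n)%N -> 0 <= g -> \sum_j y j = 0 -> (forall j, a <= y j <= a + n.-1%:R * (2 * g)) ->
  (2 * n%:R ^+ 3)^-1 * \sum_j y j ^+ 2 <= g ^+ 2.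
Proof.
move=> n_gt0 g_ge0 sum_y0 /(sum_sqr_le_range sum_y0).
rewrite card_ord (_ : (_ + _ * (2 * g) - _) / 2 = n.-1%:R * g); last by field.
set N := n%:R : R; set K := n.-1%:R : R => sum_le.
rewrite ler_pdivrMl ?mulr_gt0 ?exprn_gt0 ?ltr0n // (le_trans sum_le) //.
have Kg_le : (K * g) ^+ 2 <= N ^+ 2 * g ^+ 2.
  by rewrite -exprMn lerXn2r ?nnegrE ?mulr_ge0 ?ler_wpM2r ?ler_nat ?leq_pred.
rewrite (le_trans (ler_wpM2l (ler0n _ _) Kg_le)) // mulrA -exprS.
have : 0 <= N ^+ 3 * g ^+ 2 by rewrite mulr_ge0 ?exprn_ge0.
lra.
Qed.

Theorem proposition2p6 (R : realFieldType) (d n : nat) (U : 'M[R]_(d, n))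
  (z c : 'I_n -> R) (s : 'S_n) (k : nat) (gamma : R) :
  frame U -> (2 <= n)%N ->
  (forall j, 0 < z j) -> (forall j, 0 <= c j) -> \sum_j c j = d%:R ->
  (forall i j : 'I_n, (i <= j)%N ->
     lev U z (s i) - c (s i) <= lev U z (s j) - c (s j)) ->
  (1 <= k <= n.-1)%N ->
  is_margin U z c (prefix_set s k) gamma ->
  (forall k' g', (1 <= k' <= n.-1)%N -> is_margin U z c (prefix_set s k') g' -> g' <= gamma) ->
  gamma ^+ 2 >= (2 * n%:R ^+ 3)^-1 * \sum_j (lev U z j - c j) ^+ 2.
Proof.
move=> freeU n_ge2 z_gt0 _ sum_c sorted_x _ [[gamma_ge0 _] _] margin_max.
have n_gt0 : (0 < n)%N by apply: leq_trans n_ge2.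
set x := excess U z c.
have sum_x0 : \sum_j x j = 0 by rewrite sumrB sum_lev ?frame_gram_unitmx // sum_c subrr.
have gap (i i1 : 'I_n) : i1 = i.+1 :> nat -> x (s i1) - x (s i) <= 2 * gamma.
  move=> i1E; rewrite mulrC -ler_pdivrMr //.
  apply: margin_max (is_margin_prefix_gap sorted_x i1E).
  by rewrite /= -ltnS prednK // -i1E ltn_ord.
pose i0 : 'I_n := Ordinal n_gt0.
apply: (sum_sqr_le_spread n_gt0 gamma_ge0 sum_x0 (a := x (s i0))) => j.
rewrite -(permKV s j); set i := (s^-1 j)%g.
have := @ord_telescope_le _ _ (x \o s) _ gap i0 i (leq0n i).
rewrite sorted_x // -lerBlDl => /le_trans -> //.
by rewrite subn0 ler_wpM2r ?mulr_ge0 // ler_nat -ltnS prednK.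
Qed.
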